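(* Let $D$ be a chain BN on $X_1,\dots,X_n$ with all conditional probabilities in $(0,1)$, let $f(x)=x_n$, and let $D_{k,\mu}=\mu_{k,1}-\mu_{k,0}$ and $D_{k,\sigma}=\sigma_{k,1}-\sigma_{k,0}$ (signed). Then $$\sum_{S\subseteq[n]}\hat f_S=\sum_{k=1}^{n}(\mu_{k,0}+\sigma_{k,0})\prod_{\ell=k+1}^{n}(D_{\ell,\mu}+D_{\ell,\sigma}).$$
   Context: A chain BN on $X_1,\dots,X_n$ has $\operatorname{pa}(1)=\emptyset$, $\operatorname{pa}(i)=\{i-1\}$ for $i\ge2$; $\mu_{i,b}=P(X_i=1\mid X_{i-1}=b)$, $\sigma_{i,b}=\sqrt{\mu_{i,b}(1-\mu_{i,b})}$ for $i\ge2$, $b\in\{0,1\}$; for the root, $\mu_{1,0}=\mu_{1,1}=P(X_1=1)$ and $\sigma_{1,0}=\sigma_{1,1}=\sqrt{\mu_{1,0}(1-\mu_{1,0})}$. The BN-induced basis is $\phi_i(x)=(x_i-\mu_{i,x_{i-1}})/\sigma_{i,x_{i-1}}$ (root: $(x_1-\mu_{1,0})/\sigma_{1,0}$), $\phi_S=\prod_{i\in S}\phi_i$, and $\hat f_S=\mathbb{E}_D[f(X)\phi_S(X)]$. *)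

From HB Require Import structures.
From mathcomp Require Import all_boot all_order all_algebra.
Set Implicit Arguments. Unset Strict Implicit. Unset Printing Implicit Defensive.
Import Order.TTheory GRing.Theory Num.Theory.
Local Open Scope ring_scope.

Section ChainBN.
Variable R : rcfType.
Variable n : nat.
(* p1 = P(X_1 = 1); q k b = P(X_k = 1 | X_{k-1} = b) for 2 <= k <= n. *)
Variable p1 : R.
Variable q : nat -> bool -> R.

(* value of X_k (1-based) in the assignment x; X_0 is a dummy (false) *)
Definition xv (x : {ffun 'I_n -> bool}) (k : nat) : bool :=
  if k is k'.+1 then (if insub k' is Some i then x i else false) else false.

Definition mu (k : nat) (b : bool) : R := if k == 1%N then p1 else q k b.
Definition sigma (k : nat) (b : bool) : R := Num.sqrt (mu k b * (1 - mu k b)).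

Definition prob (x : {ffun 'I_n -> bool}) : R :=
  \prod_(1 <= k < n.+1)
     (if xv x k then mu k (xv x k.-1) else 1 - mu k (xv x k.-1)).

Definition expect (g : {ffun 'I_n -> bool} -> R) : R :=
  \sum_(x : {ffun 'I_n -> bool}) prob x * g x.

Definition phi (k : nat) (x : {ffun 'I_n -> bool}) : R :=
  ((xv x k)%:R - mu k (xv x k.-1)) / sigma k (xv x k.-1).

(* phi_S for S a subset of [n] (element i : 'I_n stands for index i+1) *)
Definition phiS (S : {set 'I_n}) (x : {ffun 'I_n -> bool}) : R :=
  \prod_(i in S) phi i.+1 x.

Definition fhat (f : {ffun 'I_n -> bool} -> R) (S : {set 'I_n}) : R :=
  expect (fun x => f x * phiS S x).

Definition f_last (x : {ffun 'I_n -> bool}) : R := (xv x n)%:R.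

Definition Dmu (k : nat) : R := mu k true - mu k false.
Definition Dsig (k : nat) : R := sigma k true - sigma k false.

End ChainBN.

(* Since [sum_S phi_S = prod_k (1 + phi_k)], the left-hand side is the expectation of
   [X_n * prod_k (1 + phi_k)].  Summing the chain out from the root, each factor acts on
   functions of the current state by the transfer operator
   [g |-> (a |-> E[(1 + phi_k) g(X_k) | X_{k-1} = a])], which maps an affine function
   [b |-> al + be * b] to the affine function [a |-> al + be * (mu_{k,a} + sigma_{k,a})],
   because [E[(1 + phi_k) X_k | X_{k-1} = a] = mu_{k,a} + sigma_{k,a}].  Reading off the
   coefficients gives a Horner scheme whose expansion is the right-hand side. *)
From Pilot Require Import Defs.
From HB Require Import structures.
From mathcomp Require Import all_boot all_order all_algebra.
From mathcomp Require Import ring.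
Set Implicit Arguments. Unset Strict Implicit. Unset Printing Implicit Defensive.
Import Order.TTheory GRing.Theory Num.Theory.
Local Open Scope ring_scope.

Lemma xv_lt m (x : {ffun 'I_m -> bool}) k (h : (k < m)%N) : xv x k.+1 = x (Ordinal h).
Proof. by rewrite /= insubT. Qed.

Lemma xv_ge m (x : {ffun 'I_m -> bool}) k : (m <= k)%N -> xv x k.+1 = false.
Proof. by move=> h; rewrite /= insubF // ltnNge h. Qed.

Definition ffun_rcons m (y : {ffun 'I_m -> bool}) (b : bool) : {ffun 'I_m.+1 -> bool} :=
  [ffun i : 'I_m.+1 => oapp y b (insub (val i) : option 'I_m)].

Lemma xv_rcons m (y : {ffun 'I_m -> bool}) b k :
  xv (ffun_rcons y b) k = if k == m.+1 then b else xv y k.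
Proof.
case: k => [|k] //; rewrite eqSS.
have [hk|hk] := ltnP k m.
  have hk' : (k < m.+1)%N by rewrite ltnS ltnW.
  by rewrite (xv_lt _ hk) (xv_lt _ hk') ffunE /= insubT /= (ltn_eqF hk).
rewrite (xv_ge y hk); case: eqP => [->|/eqP hne].
  by rewrite (xv_lt _ (ltnSn m)) ffunE /= insubF // ltnn.
by rewrite xv_ge // ltn_neqAle eq_sym hne.
Qed.

Lemma ffun_rcons_bij m :
  bijective (fun p : {ffun 'I_m -> bool} * bool => ffun_rcons p.1 p.2).
Proof.
exists (fun x : {ffun 'I_m.+1 -> bool} =>
  ([ffun j : 'I_m => x (widen_ord (leqnSn m) j)], x ord_max)).
  case=> y b /=; congr pair; last by rewrite ffunE /= insubF // ltnn.
  by apply/ffunP=> j; rewrite !ffunE /= valK.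
move=> x; apply/ffunP=> i; rewrite ffunE /=.
case: insubP => [j _ ej|hi] /=.
  by rewrite ffunE; congr (x _); apply: val_inj.
congr (x _); apply: val_inj => /=.
by apply/eqP; rewrite eqn_leq leqNgt hi -ltnS ltn_ord.
Qed.

Lemma sum_set_prod (R : comPzRingType) m (F : 'I_m -> R) :
  \sum_(S : {set 'I_m}) \prod_(i in S) F i = \prod_(i : 'I_m) (1 + F i).
Proof.
under [RHS]eq_bigr do rewrite addrC.
by rewrite (bigA_distr _ _ F (fun _ => 1)); apply: eq_bigr => S _; rewrite big_mkcond.
Qed.

Section ChainSum.
Variables (R : comPzRingType) (w : nat -> bool -> bool -> R).

(* [w k a b] is the weight of the transition [X_{k-1} = a -> X_k = b]; [X_0 = false]. *)
Definition chain_sum m (g : bool -> R) : R :=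
  \sum_(x : {ffun 'I_m -> bool})
    (\prod_(1 <= k < m.+1) w k (xv x k.-1) (xv x k)) * g (xv x m).

Definition transfer k (g : bool -> R) (a : bool) : R := \sum_(b : bool) w k a b * g b.

Lemma chain_sum0 g : chain_sum 0 g = g false.
Proof.
rewrite /chain_sum (big_pred1 [ffun i : 'I_0 => false]); last first.
  by move=> x /=; apply/esym/eqP/ffunP => -[].
by rewrite big_geq // mul1r.
Qed.

Lemma chain_sumS m g : chain_sum m.+1 g = chain_sum m (transfer m.+1 g).
Proof.
rewrite /chain_sum (reindex _ (onW_bij _ (ffun_rcons_bij m))) /=.
rewrite -(pair_bigA _ (fun y b => \prod_(1 <= k < m.+2)
  w k (xv (ffun_rcons y b) k.-1) (xv (ffun_rcons y b) k) * g (xv (ffun_rcons y b) m.+1))).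
apply: eq_bigr => y _; rewrite /transfer big_distrr; apply: eq_bigr => b _.
rewrite big_nat_recr // !xv_rcons eqxx (ltn_eqF (ltnSn m)) -!mulrA; congr (_ * _).
apply: eq_big_nat => k /andP [_ hk].
by rewrite !xv_rcons (ltn_eqF hk) ltn_eqF // (leq_ltn_trans (leq_pred k) hk).
Qed.

Lemma eq_chain_sum m g1 g2 : g1 =1 g2 -> chain_sum m g1 = chain_sum m g2.
Proof. by move=> e; apply: eq_bigr => x _; rewrite e. Qed.

End ChainSum.

Lemma bernoulli_tilt_affine (R : rcfType) (u al be : R) : 0 < u < 1 ->
  let s := Num.sqrt (u * (1 - u)) in
  \sum_(b : bool) (if b then u else 1 - u) * (1 + (b%:R - u) / s) * (al + be * b%:R)
  = al + be * (u + s).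
Proof.
move=> /andP [u0 u1] s.
have hs2 : s ^+ 2 = u * (1 - u) by rewrite sqr_sqrtr // mulr_ge0 ?subr_ge0 ?ltW.
have s0 : s != 0 by rewrite gt_eqF // sqrtr_gt0 mulr_gt0 // subr_gt0.
rewrite big_bool /=; apply/eqP; rewrite -subr_eq0; apply/eqP.
transitivity ((u * (1 - u) - s ^+ 2) * be / s); last by rewrite hs2 subrr !mul0r.
by field.
Qed.

Section ChainFourier.
Variables (R : rcfType) (n : nat) (p1 : R) (q : nat -> bool -> R).
Hypothesis hp1 : 0 < p1 < 1.
Hypothesis hq : forall k b, (2 <= k <= n)%N -> 0 < q k b < 1.

Local Notation mu := (mu p1 q).
Local Notation sigma := (sigma p1 q).

Definition tilted_weight k (a b : bool) : R :=
  (if b then mu k a else 1 - mu k a) * (1 + (b%:R - mu k a) / sigma k a).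

Lemma mu_in01 k a : (1 <= k <= n)%N -> 0 < mu k a < 1.
Proof.
move=> /andP [h1 h2]; rewrite /Defs.mu; case: eqP => [//|/eqP hk].
by apply: hq; rewrite h2 andbT ltn_neqAle eq_sym hk.
Qed.

Lemma sum_fhat_last :
  \sum_(S : {set 'I_n}) fhat p1 q (@f_last R n) S
  = chain_sum tilted_weight n (fun b => b%:R).
Proof.
rewrite /fhat /expect exchange_big; apply: eq_bigr => x _.
rewrite -big_distrr -big_distrr /= /phiS sum_set_prod.
have -> : \prod_(i : 'I_n) (1 + phi p1 q i.+1 x) = \prod_(1 <= k < n.+1) (1 + phi p1 q k x).
  by rewrite big_add1 /= big_mkord.
by rewrite /f_last mulrCA mulrC /prob -big_split.
Qed.

Definition horner_rhs m : R :=
  \sum_(1 <= k < m.+1) (mu k false + sigma k false) *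
     \prod_(k.+1 <= l < m.+1) (Dmu p1 q l + Dsig p1 q l).

Lemma horner_rhsS m :
  horner_rhs m.+1 = mu m.+1 false + sigma m.+1 false
                    + (Dmu p1 q m.+1 + Dsig p1 q m.+1) * horner_rhs m.
Proof.
rewrite /horner_rhs big_nat_recr //= [\prod_(m.+2 <= l < m.+2) _]big_geq //.
rewrite mulr1 addrC big_distrr /=.
congr (_ + _); apply: eq_big_nat => k /andP [_ hk].
by rewrite big_nat_recr //=; ring.
Qed.

Lemma transfer_affine k (al be : R) a : (1 <= k <= n)%N ->
  transfer tilted_weight k (fun b => al + be * b%:R) a
  = al + be * (mu k false + sigma k false)
    + be * (Dmu p1 q k + Dsig p1 q k) * a%:R.
Proof.
move=> hk; rewrite /transfer (bernoulli_tilt_affine _ _ (mu_in01 a hk)).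
rewrite -/(sigma k a); case: a; rewrite /Dmu /Dsig /=; ring.
Qed.

Lemma chain_sum_affine m (al be : R) : (m <= n)%N ->
  chain_sum tilted_weight m (fun b => al + be * b%:R) = al + be * horner_rhs m.
Proof.
elim: m al be => [|m IH] al be hm.
  by rewrite chain_sum0 /horner_rhs big_geq // mulr0.
have hk : (1 <= m.+1 <= n)%N by rewrite hm.
rewrite chain_sumS (eq_chain_sum _ _ (fun a => transfer_affine al be a hk)).
by rewrite IH ?(ltnW hm) // horner_rhsS; ring.
Qed.

End ChainFourier.

Theorem mainTheorem11 (R : rcfType) (n : nat) (hn : (0 < n)%N)
  (p1 : R) (q : nat -> bool -> R)
  (hp1 : 0 < p1 < 1)
  (hq : forall k b, (2 <= k <= n)%N -> 0 < q k b < 1) :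
  \sum_(S : {set 'I_n}) fhat p1 q (@f_last R n) S =
  \sum_(1 <= k < n.+1)
     (mu p1 q k false + sigma p1 q k false) *
     \prod_(k.+1 <= l < n.+1) (Dmu p1 q l + Dsig p1 q l).
Proof.
rewrite sum_fhat_last.
transitivity (chain_sum (tilted_weight p1 q) n (fun b => 0 + 1 * b%:R)).
  by apply: eq_chain_sum => b; rewrite add0r mul1r.
by rewrite (chain_sum_affine hp1 hq 0 1 (leqnn n)) add0r mul1r.
Qed.
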